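(* Let $n\geq2$ and let $f$ be a hypercyclic vector for $W_n^{*}$. Then $\mathcal{N}^{\perp}\cap Z_f(W_n^{*})=\{0\}$.
   Context: $H^2$ denotes the Hardy space of analytic functions $f(z)=\sum_{j\ge0}\hat f(j)z^j$ on the open unit disk $\mathbb{D}$ with $\sum_{j}|\hat f(j)|^2<\infty$. For $n\in\mathbb{N}$, $W_n$ is the bounded operator on $H^2$ given by $W_nf(z)=(1+z+\cdots+z^{n-1})f(z^n)$ and $W_n^{*}$ is its adjoint; $f$ is hypercyclic for $W_n^*$ if its orbit $\{(W_n^* )^jf:j\in\mathbb{N}\}$ is dense. For an operator $T$ and vector $x$, $Z_x(T)=\{p(T)x: p \text{ a polynomial}\}$. For each integer $k\geq2$, $h_k(z)=\frac{1}{1-z}\log\left(\frac{1+z+\cdots+z^{k-1}}{k}\right)$ (holomorphic branch of the logarithm on $\mathbb{D}$, real at $z=0$), which lies in $H^2$; $\mathcal{N}=\mathrm{span}\{h_k:k\geq2\}$ and $\mathcal{N}^\perp$ is its orthogonal complement in $H^2$. *)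

From Stdlib Require Import Reals Lra List.
From Coquelicot Require Import Coquelicot.
Open Scope R_scope.

(* Elements of H^2 are identified with their Taylor coefficient sequences:
   f(z) = sum_j f^(j) z^j  <->  (fun j => f^(j)) : nat -> C. *)
Definition seqC := nat -> C.

Definition inH2 (a : seqC) : Prop := ex_series (fun j => (Cmod (a j)) ^ 2).

Definition H2norm (a : seqC) : R := sqrt (Series (fun j => (Cmod (a j)) ^ 2)).

Fixpoint csum (m : nat) (g : nat -> C) : C :=
  match m with
  | O => 0%C
  | S m' => (csum m' g + g m')%C
  end.

(* W_n f (z) = (1 + z + ... + z^{n-1}) f(z^n): on coefficients,
   (W_n a)(k) = a(k / n) (Euclidean quotient). *)
Definition Wn (n : nat) (a : seqC) : seqC := fun k => a (Nat.div k n).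

(* Its Hilbert-space adjoint on H^2: since <W_n a, b> = sum_j a(j) conj(sum_{r<n} b(nj+r)),
   (W_n^* b)(j) = sum_{r<n} b(n j + r). *)
Definition Wn_adj (n : nat) (b : seqC) : seqC :=
  fun j => csum n (fun r => b (n * j + r)%nat).

Definition hypercyclic (T : seqC -> seqC) (f : seqC) : Prop :=
  inH2 f /\
  forall g : seqC, inH2 g -> forall eps : R, 0 < eps ->
    exists j : nat, H2norm (fun i => (Nat.iter j T f i - g i)%C) < eps.

(* p(T) x for the polynomial p(X) = c_0 + c_1 X + ... + c_d X^d given by the
   coefficient list [c_0; ...; c_d]. *)
Fixpoint polyapp (T : seqC -> seqC) (cs : list C) (x : seqC) : seqC :=
  match cs with
  | nil => fun _ => 0%C
  | cons c cs' => fun i => (c * x i + polyapp T cs' (T x) i)%C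
  end.

(* Taylor coefficients of log((1 + z + ... + z^{k-1}) / k)
   = log(1 - z^k) - log(1 - z) - log k
   = -log k + sum_{m>=1} z^m / m - sum_{m>=1} z^{km} / m. *)
Definition logcoef (k m : nat) : R :=
  match m with
  | O => - ln (INR k)
  | S _ => / INR m - (if Nat.eqb (Nat.modulo m k) 0 then INR k / INR m else 0)
  end.

(* Taylor coefficients of h_k(z) = (1/(1-z)) log((1+...+z^{k-1})/k):
   partial sums of the coefficients above. *)
Definition hk (k : nat) : seqC := fun j => RtoC (sum_f_R0 (logcoef k) j).

(* g in N^perp: g in H^2 and g is orthogonal to every h_k, k >= 2
   (orthogonality to the span N is orthogonality to each generator).
   <g, h_k> = sum_j g(j) conj(h_k(j)), and h_k has real coefficients. *)
Definition inNperp (g : seqC) : Prop :=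
  inH2 g /\
  forall k : nat, (2 <= k)%nat -> is_series (fun j => (g j * Cconj (hk k j))%C) (RtoC 0).

(* Write T = W_n^*. Since W_n h_k = h_{nk} - h_n, the space N^perp is T-invariant, so if
   g = p(T) f lies in N^perp then so does p(T) T^j f = T^j g for every j. The orbit of f
   comes arbitrarily close to every basis vector e_m, p(T) is bounded and h_2 is in H^2
   (its coefficients are tails of the alternating harmonic series, hence O(1/j)); so
   <p(T) e_m, h_2> = 0 for all m. That inner product is sum_i c_i h_2(m / n^i), and its
   vanishing for every m forces all coefficients c_i of p to be zero. *)

From Stdlib Require Import Reals Lra Lia FunctionalExtensionality.
From Coquelicot Require Import Coquelicot.
Open Scope R_scope.

Fixpoint rsum (m : nat) (g : nat -> R) : R :=
  match m with O => 0 | S m' => rsum m' g + g m' end.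

Lemma rsum_ext m g1 g2 :
  (forall t, (t < m)%nat -> g1 t = g2 t) -> rsum m g1 = rsum m g2.
Proof.
  induction m as [|m IH]; intros H; simpl; [reflexivity|].
  rewrite IH by (intros; apply H; lia). rewrite H by lia. reflexivity.
Qed.

Lemma rsum_le m g1 g2 :
  (forall t, (t < m)%nat -> g1 t <= g2 t) -> rsum m g1 <= rsum m g2.
Proof.
  induction m as [|m IH]; intros H; simpl; [lra|].
  pose proof (H m ltac:(lia)). pose proof (IH ltac:(intros; apply H; lia)). lra.
Qed.

Lemma rsum_plus m g1 g2 : rsum m (fun t => g1 t + g2 t) = rsum m g1 + rsum m g2.
Proof. induction m; simpl; lra. Qed.

Lemma rsum_scal m c g : rsum m (fun t => c * g t) = c * rsum m g.
Proof. induction m as [|m IH]; simpl; [|rewrite IH]; ring. Qed.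

Lemma rsum_nonneg m g : (forall t, 0 <= g t) -> 0 <= rsum m g.
Proof. intros H; induction m; simpl; [lra|]. specialize (H m). lra. Qed.

Lemma rsum_add a b g : rsum (a + b) g = rsum a g + rsum b (fun r => g (a + r)%nat).
Proof.
  induction b as [|b IH]; simpl; [rewrite Nat.add_0_r; ring|].
  rewrite Nat.add_succ_r; simpl. rewrite IH. ring.
Qed.

Lemma rsum_blocks n I g :
  rsum (n * I) g = rsum I (fun i => rsum n (fun r => g (n * i + r)%nat)).
Proof.
  induction I as [|I IH]; [rewrite Nat.mul_0_r; reflexivity|].
  replace (n * S I)%nat with (n * I + n)%nat by lia. rewrite rsum_add, IH. reflexivity.
Qed.

Lemma sum_n_rsum (a : nat -> R) N : sum_n a N = rsum (S N) a.
Proof.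
  induction N as [|N IH]; [rewrite sum_O; simpl; ring|].
  rewrite sum_Sn, IH. reflexivity.
Qed.

Lemma rsum_sqr_le m t : (rsum m t) ^ 2 <= 2 ^ m * rsum m (fun r => t r ^ 2).
Proof.
  induction m as [|m IH]; cbn [rsum]; [simpl; lra|].
  replace (2 ^ S m) with (2 * 2 ^ m) by (simpl; ring).
  assert (0 <= rsum m (fun r => t r ^ 2)) by (apply rsum_nonneg; intros; apply pow2_ge_0).
  assert (1 <= 2 ^ m) by (apply pow_R1_Rle; lra).
  assert ((rsum m t + t m) ^ 2 <= 2 * rsum m t ^ 2 + 2 * t m ^ 2)
    by (pose proof (pow2_ge_0 (rsum m t - t m)); nra).
  pose proof (pow2_ge_0 (t m)). nra.
Qed.

Lemma csum_ext m g1 g2 :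
  (forall t, (t < m)%nat -> g1 t = g2 t) -> csum m g1 = csum m g2.
Proof.
  induction m as [|m IH]; intros H; simpl; [reflexivity|].
  rewrite IH by (intros; apply H; lia). rewrite H by lia. reflexivity.
Qed.

Lemma csum_plus m g1 g2 : csum m (fun t => g1 t + g2 t)%C = (csum m g1 + csum m g2)%C.
Proof. induction m as [|m IH]; simpl; [|rewrite IH]; ring. Qed.

Lemma csum_minus m g1 g2 : csum m (fun t => g1 t - g2 t)%C = (csum m g1 - csum m g2)%C.
Proof. induction m as [|m IH]; simpl; [|rewrite IH]; ring. Qed.

Lemma csum_scal m c g : csum m (fun t => c * g t)%C = (c * csum m g)%C.
Proof. induction m as [|m IH]; simpl; [|rewrite IH]; ring. Qed.

Lemma csum_mulr m c g : (csum m g * c)%C = csum m (fun t => g t * c)%C.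
Proof. induction m as [|m IH]; simpl; [|rewrite <- IH]; ring. Qed.

Lemma csum_add a b g : csum (a + b) g = (csum a g + csum b (fun r => g (a + r)%nat))%C.
Proof.
  induction b as [|b IH]; simpl; [rewrite Nat.add_0_r; ring|].
  rewrite Nat.add_succ_r; simpl. rewrite IH. ring.
Qed.

Lemma csum_blocks n I g :
  csum (n * I) g = csum I (fun i => csum n (fun r => g (n * i + r)%nat)).
Proof.
  induction I as [|I IH]; [rewrite Nat.mul_0_r; reflexivity|].
  replace (n * S I)%nat with (n * I + n)%nat by lia. rewrite csum_add, IH. reflexivity.
Qed.

Lemma sum_n_csum (a : nat -> C) N : sum_n a N = csum (S N) a.
Proof.
  induction N as [|N IH]; [rewrite sum_O; simpl; ring|].
  rewrite sum_Sn, IH. reflexivity.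
Qed.

Lemma Cmod_csum_le m g : Cmod (csum m g) <= rsum m (fun t => Cmod (g t)).
Proof.
  induction m as [|m IH]; simpl; [rewrite Cmod_0; lra|].
  pose proof (Cmod_triangle (csum m g) (g m)). lra.
Qed.

Lemma is_series_csum_close (a : nat -> C) l eps : is_series a l -> 0 < eps ->
  exists N0, forall N, (N0 <= N)%nat -> Cmod (csum N a - l) < eps.
Proof.
  intros Ha Heps.
  destruct (proj1 (filterlim_locally_ball_norm _ _) Ha (mkposreal eps Heps)) as [N0 HN0].
  exists (S N0). intros [|N] HN; [lia|].
  rewrite <- sum_n_csum. apply (HN0 N). lia.
Qed.

Definition sqnorm_le (u : seqC) (B : R) : Prop :=
  forall N, rsum N (fun j => Cmod (u j) ^ 2) <= B.

Lemma sqnorm_le_trans u A B : sqnorm_le u A -> A <= B -> sqnorm_le u B.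
Proof. intros H HAB N. specialize (H N). lra. Qed.

Lemma sqnorm_le_scal c u B :
  sqnorm_le u B -> sqnorm_le (fun i => c * u i)%C (Cmod c ^ 2 * B).
Proof.
  intros H N.
  rewrite (rsum_ext N _ (fun j => Cmod c ^ 2 * Cmod (u j) ^ 2))
    by (intros; rewrite Cmod_mult; ring).
  rewrite rsum_scal. apply Rmult_le_compat_l; [apply pow2_ge_0 | apply H].
Qed.

Lemma sqnorm_le_triangle u v w A B :
  (forall i, Cmod (w i) <= Cmod (u i) + Cmod (v i)) ->
  sqnorm_le u A -> sqnorm_le v B -> sqnorm_le w (2 * A + 2 * B).
Proof.
  intros Hw HA HB N.
  apply Rle_trans with (rsum N (fun j => 2 * Cmod (u j) ^ 2 + 2 * Cmod (v j) ^ 2)).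
  - apply rsum_le. intros j _.
    specialize (Hw j). pose proof (Cmod_ge_0 (w j)).
    pose proof (pow2_ge_0 (Cmod (u j) - Cmod (v j))).
    assert (Cmod (w j) ^ 2 <= (Cmod (u j) + Cmod (v j)) ^ 2) by (apply pow_incr; lra).
    nra.
  - rewrite rsum_plus, !rsum_scal. specialize (HA N). specialize (HB N). lra.
Qed.

Lemma sum_n_sqnorm_incr (u : seqC) M :
  sum_n (fun j => Cmod (u j) ^ 2) M <= sum_n (fun j => Cmod (u j) ^ 2) (S M).
Proof. rewrite !sum_n_rsum. simpl. pose proof (pow2_ge_0 (Cmod (u (S M)))). lra. Qed.

Lemma inH2_of_sqnorm_le u B : sqnorm_le u B -> inH2 u.
Proof.
  intros H.
  destruct (ex_finite_lim_seq_incr (sum_n (fun j => Cmod (u j) ^ 2)) B) as [l Hl].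
  - apply sum_n_sqnorm_incr.
  - intros N. rewrite sum_n_rsum. apply H.
  - exists l. exact Hl.
Qed.

Lemma sqnorm_le_Series u : inH2 u -> sqnorm_le u (Series (fun j => Cmod (u j) ^ 2)).
Proof.
  intros [l Hl] N. rewrite (is_series_unique _ _ Hl).
  apply Rle_trans with (rsum (S N) (fun j => Cmod (u j) ^ 2)).
  - simpl. pose proof (pow2_ge_0 (Cmod (u N))). lra.
  - rewrite <- sum_n_rsum. apply is_lim_seq_incr_compare; [exact Hl | apply sum_n_sqnorm_incr].
Qed.

Lemma sqnorm_le_of_H2norm_lt u B eps :
  sqnorm_le u B -> H2norm u < eps -> sqnorm_le u (eps ^ 2).
Proof.
  intros HB Hnorm.
  pose proof (sqnorm_le_Series u (inH2_of_sqnorm_le u B HB)) as HS.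
  unfold H2norm in Hnorm. set (S := Series _) in *.
  assert (HS0 : 0 <= S) by exact (HS 0%nat).
  apply (sqnorm_le_trans _ _ _ HS).
  rewrite <- (sqrt_sqrt S HS0). pose proof (sqrt_pos S). nra.
Qed.

Lemma Cmod_csum_mul_conj_le y h A B eps N : 0 < eps ->
  sqnorm_le y (A * eps ^ 2) -> sqnorm_le h B ->
  Cmod (csum N (fun i => y i * Cconj (h i))%C) <= (A + B) / 2 * eps.
Proof.
  intros Heps Hy Hh.
  eapply Rle_trans; [apply Cmod_csum_le|].
  apply Rle_trans with
    (rsum N (fun i => / (2 * eps) * Cmod (y i) ^ 2 + eps / 2 * Cmod (h i) ^ 2)).
  - apply rsum_le. intros i _. rewrite Cmod_mult, Cmod_conj.
    (* AM-GM: the gap is (|y| - eps |h|)^2 / (2 eps) *)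
    assert (/ (2 * eps) * Cmod (y i) ^ 2 + eps / 2 * Cmod (h i) ^ 2
            - Cmod (y i) * Cmod (h i)
            = / (2 * eps) * (Cmod (y i) - eps * Cmod (h i)) ^ 2) by (field; lra).
    assert (0 <= / (2 * eps) * (Cmod (y i) - eps * Cmod (h i)) ^ 2).
    { apply Rmult_le_pos; [apply Rlt_le, Rinv_0_lt_compat; lra | apply pow2_ge_0]. }
    lra.
  - rewrite rsum_plus, !rsum_scal. specialize (Hy N). specialize (Hh N).
    assert (0 < / (2 * eps)) by (apply Rinv_0_lt_compat; lra).
    apply Rle_trans with (/ (2 * eps) * (A * eps ^ 2) + eps / 2 * B).
    + apply Rplus_le_compat; apply Rmult_le_compat_l; lra.
    + right. field. lra.
Qed.

Lemma ln_le_sub_1 y : 0 < y -> ln y <= y - 1.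
Proof.
  intros Hy. rewrite <- (ln_exp (y - 1)). apply ln_le; [exact Hy|].
  pose proof (exp_ineq1_le (y - 1)). lra.
Qed.

Lemma ln_succ_sub_bounds b : 0 < b -> / (b + 1) <= ln (b + 1) - ln b <= / b.
Proof.
  intros Hb. rewrite <- ln_div by lra. split.
  - pose proof (ln_le_sub_1 (b / (b + 1)) ltac:(apply Rdiv_lt_0_compat; lra)) as H.
    rewrite ln_div in H by lra. rewrite ln_div by lra.
    replace (b / (b + 1) - 1) with (- / (b + 1)) in H by (field; lra). lra.
  - eapply Rle_trans; [apply ln_le_sub_1, Rdiv_lt_0_compat; lra|].
    right. field. lra.
Qed.

Definition harmonic_block (a d : nat) : R := rsum d (fun t => / INR (a + 1 + t)).

Lemma harmonic_block_ln_bounds a d : (1 <= a)%nat ->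
  ln (INR a + INR d + 1) - ln (INR a + 1) <= harmonic_block a d
  <= ln (INR a + INR d) - ln (INR a).
Proof.
  intros Ha. assert (1 <= INR a) by (apply (le_INR 1); exact Ha).
  unfold harmonic_block. induction d as [|d IH]; simpl rsum.
  - simpl INR. rewrite !Rplus_0_r. lra.
  - rewrite S_INR, !plus_INR. simpl (INR 1). pose proof (pos_INR d).
    pose proof (ln_succ_sub_bounds (INR a + INR d + 1) ltac:(lra)).
    pose proof (ln_succ_sub_bounds (INR a + INR d) ltac:(lra)).
    replace (INR a + 1 + INR d) with (INR a + INR d + 1) by ring.
    replace (INR a + (INR d + 1) + 1) with (INR a + INR d + 1 + 1) by ring.
    replace (INR a + (INR d + 1)) with (INR a + INR d + 1) by ring.
    lra.
Qed.

Lemma logcoef_2_odd a : logcoef 2 (S (2 * a)) = / (2 * INR a + 1).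
Proof.
  assert (E : (S (2 * a) mod 2 = 1)%nat) by (symmetry; apply (Nat.mod_unique _ _ a); lia).
  unfold logcoef. rewrite E. simpl Nat.eqb. cbv iota.
  rewrite S_INR, mult_INR. replace (INR 2) with 2 by (simpl; ring). ring.
Qed.

Lemma logcoef_2_even a : logcoef 2 (S (S (2 * a))) = - / (2 * INR a + 2).
Proof.
  assert (E : (S (S (2 * a)) mod 2 = 0)%nat) by (symmetry; apply (Nat.mod_unique _ _ (S a)); lia).
  unfold logcoef. rewrite E. simpl Nat.eqb. cbv iota.
  replace (INR (S (S (2 * a)))) with (2 * INR a + 2) by (rewrite !S_INR, mult_INR; simpl; ring).
  replace (INR 2) with 2 by (simpl; ring).
  pose proof (pos_INR a). field. lra.
Qed.

(* As logcoef 2 (S m) = (-1)^m / (m + 1), this is H_{2a} - H_a = 1 - 1/2 + ... - 1/(2a). *)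
Lemma hk2_even a : sum_f_R0 (logcoef 2) (2 * a) = - ln 2 + harmonic_block a a.
Proof.
  induction a as [|a IH].
  - unfold harmonic_block. simpl. unfold logcoef. replace (1 + 1) with 2 by ring. ring.
  - replace (2 * S a)%nat with (S (S (2 * a))) by lia.
    rewrite !tech5, IH, logcoef_2_odd, logcoef_2_even.
    assert (Hshift : harmonic_block a (S (S a)) = / INR (S a) + harmonic_block (S a) (S a)).
    { unfold harmonic_block. replace (S (S a)) with (1 + S a)%nat by lia.
      rewrite rsum_add. f_equal.
      - cbn [rsum]. rewrite Rplus_0_l. do 2 f_equal. lia.
      - apply rsum_ext. intros t _. do 2 f_equal. lia. }
    assert (Hext : harmonic_block a (S (S a))
                   = harmonic_block a a + / (2 * INR a + 1) + / (2 * INR a + 2)).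
    { unfold harmonic_block. cbn [rsum].
      replace (INR (a + 1 + a)) with (2 * INR a + 1) by (rewrite !plus_INR; simpl; ring).
      replace (INR (a + 1 + S a)) with (2 * INR a + 2) by (rewrite !plus_INR, (S_INR a); simpl; ring).
      reflexivity. }
    assert (/ INR (S a) = 2 * / (2 * INR a + 2))
      by (rewrite S_INR; pose proof (pos_INR a); field; lra).
    lra.
Qed.

Lemma hk2_even_bounds a : - / (2 * INR a + 1) <= sum_f_R0 (logcoef 2) (2 * a) <= 0.
Proof.
  pose proof ln_lt_2. pose proof (ln_le_sub_1 2 ltac:(lra)).
  destruct a as [|a].
  - simpl. unfold logcoef. replace (1 + 1) with 2 by ring.
    rewrite Rmult_0_r, Rplus_0_l, Rinv_1. lra.
  - rewrite hk2_even.
    set (x := INR (S a)).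
    assert (1 <= x) by (apply (le_INR 1); lia).
    destruct (harmonic_block_ln_bounds (S a) (S a) ltac:(lia)) as [Hlow Hup]. fold x in Hlow, Hup.
    replace (ln (x + x)) with (ln 2 + ln x) in Hup by (rewrite <- ln_mult by lra; f_equal; ring).
    replace (ln (x + 1)) with (ln (x + x + 1 + 1) - ln 2) in Hlow
      by (replace (x + x + 1 + 1) with (2 * (x + 1)) by ring; rewrite ln_mult by lra; ring).
    pose proof (ln_succ_sub_bounds (x + x + 1) ltac:(lra)).
    replace (2 * x + 1) with (x + x + 1) by ring. lra.
Qed.

Lemma hk2_abs_le j : Rabs (sum_f_R0 (logcoef 2) j) <= 2 / (INR j + 1).
Proof.
  destruct (Nat.Even_or_Odd j) as [[a ->] | [a ->]];
    pose proof (hk2_even_bounds a); pose proof (pos_INR a).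
  - rewrite mult_INR. replace (INR 2) with 2 by (simpl; ring).
    rewrite Rabs_left1 by lra.
    assert (/ (2 * INR a + 1) <= 2 / (2 * INR a + 1)).
    { unfold Rdiv. assert (0 < / (2 * INR a + 1)) by (apply Rinv_0_lt_compat; lra). lra. }
    lra.
  - replace (2 * a + 1)%nat with (S (2 * a)) by lia.
    rewrite tech5, logcoef_2_odd, S_INR, mult_INR. replace (INR 2) with 2 by (simpl; ring).
    assert (0 < / (2 * INR a + 1)) by (apply Rinv_0_lt_compat; lra).
    rewrite Rabs_right by lra.
    assert (/ (2 * INR a + 1) <= 2 / (2 * INR a + 1 + 1)).
    { apply (Rmult_le_reg_l ((2 * INR a + 1) * (2 * INR a + 1 + 1))); [nra|].
      field_simplify; lra. }
    lra.
Qed.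

Lemma rsum_inv_sqr_le N : rsum N (fun j => / (INR j + 1) ^ 2) <= 2 - 2 / (INR N + 1).
Proof.
  induction N as [|N IH]; cbn [rsum]; [simpl; lra|].
  rewrite S_INR. pose proof (pos_INR N).
  assert (/ (INR N + 1) ^ 2 <= 2 / (INR N + 1) - 2 / (INR N + 1 + 1)).
  { apply (Rmult_le_reg_l ((INR N + 1) ^ 2 * (INR N + 1 + 1))); [nra|].
    field_simplify; lra. }
  lra.
Qed.

Lemma sqnorm_le_hk2 : sqnorm_le (hk 2) 8.
Proof.
  intros N. apply Rle_trans with (rsum N (fun j => 4 * / (INR j + 1) ^ 2)).
  - apply rsum_le. intros j _. unfold hk. rewrite Cmod_R.
    pose proof (hk2_abs_le j). pose proof (pos_INR j).
    pose proof (Rabs_pos (sum_f_R0 (logcoef 2) j)).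
    apply Rle_trans with ((2 / (INR j + 1)) ^ 2); [apply pow_incr; lra|].
    right. field. lra.
  - rewrite rsum_scal. pose proof (rsum_inv_sqr_le N). pose proof (pos_INR N).
    assert (0 < 2 / (INR N + 1)) by (apply Rdiv_lt_0_compat; lra). lra.
Qed.

Section Operator.
Variable n : nat.
Notation T := (Wn_adj n).

Lemma Wn_adj_lincomb a x y :
  T (fun i => a * x i + y i)%C = (fun i => a * T x i + T y i)%C.
Proof.
  apply functional_extensionality. intros i. unfold Wn_adj.
  rewrite csum_plus, csum_scal. reflexivity.
Qed.

Lemma Wn_adj_sub x y : T (fun i => x i - y i)%C = (fun i => T x i - T y i)%C.
Proof.
  apply functional_extensionality. intros i. unfold Wn_adj. apply csum_minus.
Qed.

Lemma Wn_adj_zero : T (fun _ => 0%C) = (fun _ => 0%C).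
Proof.
  apply functional_extensionality. intros i. unfold Wn_adj.
  induction n as [|m IH]; simpl; [|rewrite IH]; ring.
Qed.

Lemma Wn_adj_polyapp cs x : T (polyapp T cs x) = polyapp T cs (T x).
Proof.
  revert x. induction cs as [|c cs IH]; intros x; simpl.
  - apply Wn_adj_zero.
  - rewrite Wn_adj_lincomb, IH. reflexivity.
Qed.

Lemma iter_Wn_adj_polyapp j cs x :
  Nat.iter j T (polyapp T cs x) = polyapp T cs (Nat.iter j T x).
Proof.
  induction j as [|j IH]; simpl; [reflexivity|]. rewrite IH. apply Wn_adj_polyapp.
Qed.

Lemma polyapp_sub cs x y i :
  polyapp T cs (fun i => x i - y i)%C i = (polyapp T cs x i - polyapp T cs y i)%C.
Proof.
  revert x y. induction cs as [|c cs IH]; intros x y; simpl; [ring|].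
  rewrite Wn_adj_sub, IH. ring.
Qed.

Lemma sqnorm_le_Wn_adj u B : sqnorm_le u B -> sqnorm_le (T u) (2 ^ n * B).
Proof.
  intros H I.
  apply Rle_trans with (rsum I (fun i => 2 ^ n * rsum n (fun r => Cmod (u (n * i + r)%nat) ^ 2))).
  - apply rsum_le. intros i _. unfold Wn_adj.
    eapply Rle_trans; [|apply rsum_sqr_le].
    apply pow_incr. split; [apply Cmod_ge_0 | apply Cmod_csum_le].
  - rewrite rsum_scal, <- (rsum_blocks n I (fun j => Cmod (u j) ^ 2)).
    apply Rmult_le_compat_l; [apply pow_le; lra | apply H].
Qed.

Lemma sqnorm_le_iter_Wn_adj j u B :
  sqnorm_le u B -> sqnorm_le (Nat.iter j T u) ((2 ^ n) ^ j * B).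
Proof.
  intros H. induction j as [|j IH]; simpl.
  - rewrite Rmult_1_l. exact H.
  - rewrite Rmult_assoc. apply sqnorm_le_Wn_adj, IH.
Qed.

Fixpoint polyapp_bound (cs : list C) : R :=
  match cs with
  | nil => 0
  | cons c cs' => 2 * Cmod c ^ 2 + 2 * (polyapp_bound cs' * 2 ^ n)
  end.

Lemma polyapp_bound_nonneg cs : 0 <= polyapp_bound cs.
Proof.
  induction cs as [|c cs IH]; simpl; [lra|].
  pose proof (pow2_ge_0 (Cmod c)). assert (0 < 2 ^ n) by (apply pow_lt; lra). nra.
Qed.

Lemma sqnorm_le_polyapp cs u B :
  sqnorm_le u B -> sqnorm_le (polyapp T cs u) (polyapp_bound cs * B).
Proof.
  revert u B. induction cs as [|c cs IH]; intros u B H; simpl.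
  - intros N. rewrite Rmult_0_l, Cmod_0, pow_i by lia.
    induction N as [|N IHN]; cbn [rsum]; lra.
  - eapply sqnorm_le_trans.
    + apply (sqnorm_le_triangle (fun i => c * u i)%C (polyapp T cs (T u))).
      * intros i. apply Cmod_triangle.
      * apply sqnorm_le_scal, H.
      * apply IH, sqnorm_le_Wn_adj, H.
    + right. ring.
Qed.

End Operator.

Lemma logcoef_pos k m : (1 <= m)%nat ->
  logcoef k m = / INR m - (if Nat.eqb (m mod k) 0 then INR k / INR m else 0).
Proof. intros Hm. destruct m; [lia | reflexivity]. Qed.

(* Coefficientwise form of log((1 + ... + z^(nk-1)) / nk) - log((1 + ... + z^(n-1)) / n)
   = log((1 + ... + w^(k-1)) / k) with w = z^n. *)
Lemma logcoef_mul_sub n k m : (1 <= n)%nat -> (1 <= k)%nat ->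
  logcoef (n * k) m - logcoef n m
  = if Nat.eqb (m mod n)%nat 0 then logcoef k (m / n)%nat else 0.
Proof.
  intros Hn Hk.
  assert (HnR : 1 <= INR n) by (apply (le_INR 1); exact Hn).
  destruct m as [|m].
  - rewrite Nat.Div0.mod_0_l, Nat.Div0.div_0_l. simpl Nat.eqb. cbv iota. unfold logcoef.
    assert (1 <= INR k) by (apply (le_INR 1); exact Hk).
    rewrite mult_INR, ln_mult by lra. ring.
  - rewrite !(logcoef_pos _ (S m)) by lia.
    destruct (Nat.eqb_spec (S m mod n) 0) as [Hdiv | Hndiv].
    + assert (Hq : exists q, S m = (n * S q)%nat).
      { exists (pred (S m / n)). pose proof (Nat.div_mod_eq (S m) n) as E.
        rewrite Hdiv in E. revert E. destruct (S m / n)%nat; simpl; nia. }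
      destruct Hq as [q ->].
      rewrite Nat.Div0.mul_mod_distr_l, (Nat.mul_comm n (S q)), Nat.div_mul by lia.
      rewrite logcoef_pos by lia. rewrite (Nat.mul_comm (S q) n), mult_INR.
      assert (1 <= INR (S q)) by (apply (le_INR 1); lia).
      destruct (Nat.eqb_spec (S q mod k) 0) as [Hk0 | Hk0].
      * rewrite Hk0, Nat.mul_0_r. simpl Nat.eqb. cbv iota.
        rewrite mult_INR. field. lra.
      * replace (Nat.eqb (n * (S q mod k)) 0) with false by (symmetry; apply Nat.eqb_neq; nia).
        field. lra.
    + replace (Nat.eqb (S m mod (n * k)) 0) with false.
      * ring.
      * symmetry. apply Nat.eqb_neq. rewrite Nat.Div0.mod_mul_r. lia.
Qed.

Lemma sum_f_R0_upsample n (a : nat -> R) j : (1 <= n)%nat ->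
  sum_f_R0 (fun m => if Nat.eqb (m mod n)%nat 0 then a (m / n)%nat else 0) j = sum_f_R0 a (j / n).
Proof.
  intros Hn. induction j as [|j IH].
  - simpl. rewrite Nat.Div0.mod_0_l, Nat.Div0.div_0_l. reflexivity.
  - rewrite tech5, IH.
    pose proof (Nat.div_mod_eq j n). pose proof (Nat.mod_upper_bound j n ltac:(lia)).
    destruct (Nat.eq_dec (S (j mod n)) n) as [Hwrap | Hin].
    + assert (Hdiv : (S j / n = S (j / n))%nat)
        by (symmetry; apply (Nat.div_unique _ _ _ 0); nia).
      assert (Hmod : (S j mod n = 0)%nat)
        by (symmetry; apply (Nat.mod_unique _ _ (S (j / n))); nia).
      rewrite Hmod, Hdiv, tech5. reflexivity.
    + assert (Hdiv : (S j / n = j / n)%nat)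
        by (symmetry; apply (Nat.div_unique _ _ _ (S (j mod n))); lia).
      assert (Hmod : (S j mod n = S (j mod n))%nat)
        by (symmetry; apply (Nat.mod_unique _ _ (j / n)); lia).
      rewrite Hmod, Hdiv. simpl Nat.eqb. cbv iota. ring.
Qed.

Lemma Wn_hk n k j : (1 <= n)%nat -> (1 <= k)%nat ->
  Wn n (hk k) j = (hk (n * k) j - hk n j)%C.
Proof.
  intros Hn Hk. unfold Wn, hk. rewrite <- RtoC_minus, <- minus_sum. f_equal.
  rewrite <- sum_f_R0_upsample by exact Hn.
  apply sum_eq. intros m _. symmetry. apply logcoef_mul_sub; assumption.
Qed.

Lemma is_series_blocks n (a : nat -> C) l : (1 <= n)%nat -> is_series a l ->
  is_series (fun i => csum n (fun r => a (n * i + r)%nat)) l.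
Proof.
  intros Hn Ha. unfold is_series in *.
  eapply filterlim_ext.
  { intros I. symmetry. rewrite sum_n_csum, <- csum_blocks.
    replace (n * S I)%nat with (S (pred (n * S I))) by nia.
    rewrite <- sum_n_csum. reflexivity. }
  eapply filterlim_comp; [|exact Ha].
  intros P [N HN]. exists N. intros I HI. apply HN. nia.
Qed.

(* Series form of the adjunction <W_n^* u, h> = <u, W_n h>. *)
Lemma is_series_Wn_adj_inner n (u h : seqC) l : (1 <= n)%nat ->
  is_series (fun j => u j * Cconj (Wn n h j))%C l ->
  is_series (fun i => Wn_adj n u i * Cconj (h i))%C l.
Proof.
  intros Hn Hs. eapply is_series_ext; [|exact (is_series_blocks n _ l Hn Hs)].
  intros i. simpl. unfold Wn_adj. rewrite csum_mulr. apply csum_ext. intros r Hr.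
  unfold Wn. replace ((n * i + r) / n)%nat with i by (apply (Nat.div_unique _ _ _ r); lia).
  reflexivity.
Qed.

Definition orth_hk (u : seqC) : Prop :=
  forall k, (2 <= k)%nat -> is_series (fun j => u j * Cconj (hk k j))%C (RtoC 0).

Lemma orth_hk_Wn_adj n u : (2 <= n)%nat -> orth_hk u -> orth_hk (Wn_adj n u).
Proof.
  intros Hn Hu k Hk. apply is_series_Wn_adj_inner; [lia|].
  pose proof (is_series_minus _ _ _ _ (Hu (n * k)%nat ltac:(nia)) (Hu n Hn)) as Hdiff.
  replace (RtoC 0) with (RtoC 0 - RtoC 0)%C by ring.
  eapply is_series_ext; [|exact Hdiff].
  intros j. simpl. rewrite Wn_hk, Cminus_conj by lia.
  change (plus ?x (opp ?y)) with (Cminus x y). ring.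
Qed.

Lemma orth_hk_iter_Wn_adj n j u : (2 <= n)%nat -> orth_hk u -> orth_hk (Nat.iter j (Wn_adj n) u).
Proof.
  intros Hn Hu. induction j as [|j IH]; simpl; [exact Hu|]. apply orth_hk_Wn_adj; assumption.
Qed.

Definition basis (m : nat) : seqC := fun i => if Nat.eqb i m then RtoC 1 else RtoC 0.

Lemma csum_basis_mul m N (z : seqC) :
  csum N (fun i => basis m i * z i)%C = if Nat.ltb m N then z m else RtoC 0.
Proof.
  induction N as [|N IH]; simpl; [reflexivity|]. rewrite IH. unfold basis.
  destruct (Nat.eqb_spec N m); destruct (Nat.ltb_spec m N); destruct (Nat.ltb_spec m (S N));
    try lia; subst; ring.
Qed.

Lemma sqnorm_le_basis m : sqnorm_le (basis m) 1.
Proof.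
  intros N.
  assert (E : rsum N (fun j => Cmod (basis m j) ^ 2) = if Nat.ltb m N then 1 else 0).
  { induction N as [|N IH]; cbn [rsum]; [reflexivity|]. rewrite IH. unfold basis.
    destruct (Nat.eqb_spec N m); destruct (Nat.ltb_spec m N); destruct (Nat.ltb_spec m (S N));
      try lia; rewrite ?Cmod_1, ?Cmod_0; ring. }
  rewrite E. destruct (Nat.ltb m N); lra.
Qed.

Lemma csum_basis_shift m a N :
  csum N (fun r => basis m (a + r)%nat)
  = if andb (Nat.leb a m) (Nat.ltb m (a + N)) then RtoC 1 else RtoC 0.
Proof.
  unfold basis. induction N as [|N IH]; simpl.
  - destruct (Nat.leb_spec a m); destruct (Nat.ltb_spec m (a + 0)); simpl; reflexivity || lia.
  - rewrite IH. destruct (Nat.eqb_spec (a + N) m); destruct (Nat.leb_spec a m);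
      destruct (Nat.ltb_spec m (a + N)); destruct (Nat.ltb_spec m (a + S N)); simpl;
      try lia; ring.
Qed.

Lemma Wn_adj_basis n m : (1 <= n)%nat -> Wn_adj n (basis m) = basis (m / n).
Proof.
  intros Hn. apply functional_extensionality. intros i. unfold Wn_adj.
  rewrite csum_basis_shift. unfold basis.
  pose proof (Nat.div_mod_eq m n). pose proof (Nat.mod_upper_bound m n ltac:(lia)).
  destruct (Nat.eqb_spec i (m / n)) as [-> | Hne].
  - replace (Nat.leb (n * (m / n)) m) with true by (symmetry; apply Nat.leb_le; lia).
    replace (Nat.ltb m (n * (m / n) + n)) with true by (symmetry; apply Nat.ltb_lt; lia).
    reflexivity.
  - destruct (Nat.leb_spec (n * i) m); destruct (Nat.ltb_spec m (n * i + n)); simpl;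
      try reflexivity.
    exfalso. assert (i < m / n \/ m / n < i)%nat as [Hlt | Hlt] by lia; nia.
Qed.

Fixpoint poly_basis_inner (n : nat) (cs : list C) (h : seqC) (m : nat) : C :=
  match cs with
  | nil => RtoC 0
  | cons c cs' => (c * Cconj (h m) + poly_basis_inner n cs' h (m / n))%C
  end.

Lemma csum_polyapp_basis n cs h m N : (1 <= n)%nat -> (m < N)%nat ->
  csum N (fun i => polyapp (Wn_adj n) cs (basis m) i * Cconj (h i))%C
  = poly_basis_inner n cs h m.
Proof.
  intros Hn. revert m. induction cs as [|c cs IH]; intros m Hm; simpl.
  - clear Hm. induction N as [|N IHN]; simpl; [reflexivity|]. rewrite IHN. ring.
  - rewrite Wn_adj_basis by exact Hn.
    rewrite (csum_ext N _ (fun i => c * (basis m i * Cconj (h i))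
                + polyapp (Wn_adj n) cs (basis (m / n)) i * Cconj (h i))%C) by (intros; ring).
    rewrite csum_plus, csum_scal, csum_basis_mul, IH.
    + replace (Nat.ltb m N) with true by (symmetry; apply Nat.ltb_lt; exact Hm). reflexivity.
    + pose proof (Nat.div_mod_eq m n). nia.
Qed.

Lemma Cconj_hk k j : Cconj (hk k j) = hk k j.
Proof. unfold hk, Cconj, RtoC. simpl. f_equal. ring. Qed.

Lemma hk2_1 : hk 2 1%nat = (hk 2 0%nat + RtoC 1)%C.
Proof.
  unfold hk. rewrite <- RtoC_plus. f_equal. simpl. rewrite Rinv_1. ring.
Qed.

(* Comparing m = 0 with m = 1 isolates the constant coefficient (h_2(1) - h_2(0) = 1),
   and m = n m' reduces to the remaining coefficients. *)
Lemma polyapp_eq0_of_inner_hk2_eq0 n cs x : (2 <= n)%nat ->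
  (forall m, poly_basis_inner n cs (hk 2) m = RtoC 0) ->
  polyapp (Wn_adj n) cs x = (fun _ => RtoC 0).
Proof.
  intros Hn. revert x. induction cs as [|c cs IH]; intros x Hzero; simpl; [reflexivity|].
  assert (Hc : c = RtoC 0).
  { pose proof (Hzero 1%nat) as H1. pose proof (Hzero 0%nat) as H0.
    cbn [poly_basis_inner] in H1, H0. rewrite !Cconj_hk in H1, H0.
    rewrite Nat.div_small in H1 by lia. rewrite Nat.Div0.div_0_l in H0. rewrite hk2_1 in H1.
    replace c with ((c * (hk 2 0%nat + RtoC 1) + poly_basis_inner n cs (hk 2) 0)
                    - (c * hk 2 0%nat + poly_basis_inner n cs (hk 2) 0))%C by ring.
    rewrite H1, H0. ring. }
  rewrite IH.
  - apply functional_extensionality. intros i. rewrite Hc. ring.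
  - intros m. pose proof (Hzero (n * m)%nat) as Hm. cbn [poly_basis_inner] in Hm.
    rewrite Nat.mul_comm, Nat.div_mul, Hc in Hm by lia. rewrite <- Hm. ring.
Qed.

Lemma Cmod_poly_basis_inner_hk2_le n cs x m eps : (1 <= n)%nat -> 0 < eps ->
  is_series (fun j => polyapp (Wn_adj n) cs x j * Cconj (hk 2 j))%C (RtoC 0) ->
  sqnorm_le (fun i => x i - basis m i)%C (eps ^ 2) ->
  Cmod (poly_basis_inner n cs (hk 2) m) <= (1 + (polyapp_bound n cs + 8) / 2) * eps.
Proof.
  intros Hn Heps Horth Hclose.
  destruct (is_series_csum_close _ _ eps Horth Heps) as [N0 HN0].
  set (N := Nat.max N0 (S m)). specialize (HN0 N ltac:(lia)).
  set (y := polyapp (Wn_adj n) cs x) in *.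
  set (A := csum N (fun j => y j * Cconj (hk 2 j))%C) in *.
  replace (A - RtoC 0)%C with A in HN0 by ring.
  assert (Hdiff : Cmod (csum N (fun i => polyapp (Wn_adj n) cs (fun i => x i - basis m i)%C i
                                          * Cconj (hk 2 i))%C)
                  <= (polyapp_bound n cs + 8) / 2 * eps).
  { apply Cmod_csum_mul_conj_le; [exact Heps | | exact sqnorm_le_hk2].
    apply sqnorm_le_polyapp, Hclose. }
  rewrite (csum_ext N _ (fun i => y i * Cconj (hk 2 i)
                          - polyapp (Wn_adj n) cs (basis m) i * Cconj (hk 2 i))%C) in Hdiff
    by (intros; unfold y; rewrite polyapp_sub; ring).
  rewrite csum_minus, csum_polyapp_basis in Hdiff by lia. fold A in Hdiff.
  replace (poly_basis_inner n cs (hk 2) m) with (A - (A - poly_basis_inner n cs (hk 2) m))%C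
    by ring.
  eapply Rle_trans; [apply Cmod_triangle|]. rewrite Cmod_opp. lra.
Qed.

Lemma eq_0_of_le_mul_eps z K : 0 <= z -> 0 < K ->
  (forall eps, 0 < eps -> z <= K * eps) -> z = 0.
Proof.
  intros Hz HK H. apply Rle_antisym; [|exact Hz].
  apply Rnot_lt_le. intros Hpos.
  specialize (H (z / (2 * K)) ltac:(apply Rdiv_lt_0_compat; lra)).
  replace (K * (z / (2 * K))) with (z / 2) in H by (field; lra). lra.
Qed.

Theorem mainTheorem20 (n : nat) (f : seqC) :
  (2 <= n)%nat ->
  hypercyclic (Wn_adj n) f ->
  forall cs : list C,
    inNperp (polyapp (Wn_adj n) cs f) ->
    polyapp (Wn_adj n) cs f = (fun _ => 0%C).
Proof.
  intros Hn [Hf Hdense] cs [_ Horth].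
  apply polyapp_eq0_of_inner_hk2_eq0; [exact Hn|]. intros m.
  apply Cmod_eq_0, (eq_0_of_le_mul_eps _ (1 + (polyapp_bound n cs + 8) / 2)).
  - apply Cmod_ge_0.
  - pose proof (polyapp_bound_nonneg n cs). lra.
  - intros eps Heps.
    destruct (Hdense (basis m) (inH2_of_sqnorm_le _ _ (sqnorm_le_basis m)) eps Heps) as [j Hj].
    apply (Cmod_poly_basis_inner_hk2_le n cs (Nat.iter j (Wn_adj n) f)); [lia | exact Heps | |].
    + rewrite <- iter_Wn_adj_polyapp. exact (orth_hk_iter_Wn_adj n j _ Hn Horth 2%nat (le_n 2)).
    + eapply sqnorm_le_of_H2norm_lt; [|exact Hj].
      apply (sqnorm_le_triangle (Nat.iter j (Wn_adj n) f) (basis m)).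
      * intros i. rewrite <- (Cmod_opp (basis m i)). apply Cmod_triangle.
      * apply sqnorm_le_iter_Wn_adj, sqnorm_le_Series, Hf.
      * apply sqnorm_le_basis.
Qed.
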